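(* Let $(X,d)$ be a metric space with $|X|\geqslant 3$ in which every point is an accumulation point, and let $T\colon X\to X$ be a continuous generalized Ćirić–Reich–Rus type mapping with constants $\alpha,\lambda\geqslant 0$, $2\alpha+\frac{3\lambda}{2}<1$, i.e. $$d(Tx,Ty)+d(Ty,Tz)+d(Tx,Tz)\leqslant \alpha\big(d(x,y)+d(y,z)+d(z,x)\big)+\lambda\big(d(x,Tx)+d(y,Ty)+d(z,Tz)\big)$$ for all pairwise distinct $x,y,z\in X$. Then $T$ is a Ćirić–Reich–Rus type mapping with $b=c$, i.e. there exist $a,b\geqslant 0$ with $a+2b<1$ such that $$d(Tx,Ty)\leqslant a\,d(x,y)+b\,d(x,Tx)+b\,d(y,Ty)\quad\text{for all } x,y\in X.$$ *)

From Stdlib Require Export Reals Lra.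
Open Scope R_scope.

Definition is_metric {X : Type} (d : X -> X -> R) : Prop :=
  (forall x y, 0 <= d x y) /\
  (forall x y, d x y = 0 <-> x = y) /\
  (forall x y, d x y = d y x) /\
  (forall x y z, d x z <= d x y + d y z).

Definition metric_continuous {X : Type} (d : X -> X -> R) (T : X -> X) : Prop :=
  forall x eps, 0 < eps ->
    exists delta, 0 < delta /\ forall y, d x y < delta -> d (T x) (T y) < eps.

Definition accumulation_point {X : Type} (d : X -> X -> R) (x : X) : Prop :=
  forall eps, 0 < eps -> exists y, y <> x /\ d x y < eps.

Definition gen_CRR {X : Type} (d : X -> X -> R) (T : X -> X) (alpha lambda : R) : Prop :=
  forall x y z, x <> y -> y <> z -> x <> z ->
    d (T x) (T y) + d (T y) (T z) + d (T x) (T z)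
    <= alpha * (d x y + d y z + d z x) + lambda * (d x (T x) + d y (T y) + d z (T z)).

Definition CRR_bc {X : Type} (d : X -> X -> R) (T : X -> X) (a b : R) : Prop :=
  forall x y, d (T x) (T y) <= a * d x y + b * d x (T x) + b * d y (T y).

(* Fix x <> y and let z -> x through points distinct from x and y, which exist
   because x is an accumulation point. By the triangle inequality the
   three-point inequality for (x, y, z) bounds 2 d(Tx,Ty) by
   2 alpha d(x,y) + 2 lambda d(x,Tx) + lambda d(y,Ty) up to error terms in
   d(x,z) and d(Tx,Tz), which vanish by continuity of T. Adding the same bound
   with x and y exchanged gives the two-point inequality with a = alpha and
   b = 3 lambda / 4. *)

From Stdlib Require Import Reals Lra Classical.
Open Scope R_scope.

Lemma Rle_plus_scaled_epsilon (c r1 r2 : R) :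
  0 <= c -> (forall eps, 0 < eps -> r1 <= r2 + c * eps) -> r1 <= r2.
Proof.
  intros hc H; apply Rle_plus_epsilon; intros eps heps.
  assert (hc1 : 0 < c + 1) by lra.
  specialize (H (eps / (c + 1)) (Rdiv_lt_0_compat _ _ heps hc1)).
  assert (c * (eps / (c + 1)) <= eps); [|lra].
  apply (Rmult_le_reg_r (c + 1)); [lra|].
  field_simplify; [nra | lra].
Qed.

Section GeneralizedCRR.

Variables (X : Type) (d : X -> X -> R) (T : X -> X) (alpha lambda : R).
Hypothesis d_metric : is_metric d.
Hypotheses (alpha_ge0 : 0 <= alpha) (lambda_ge0 : 0 <= lambda).
Hypothesis T_gen_CRR : gen_CRR d T alpha lambda.

Lemma gen_CRR_two_points_perturbed x y z :
  x <> y -> y <> z -> x <> z ->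
  2 * d (T x) (T y) <= 2 * alpha * d x y + 2 * lambda * d x (T x)
    + lambda * d y (T y) + (2 * alpha + lambda) * d x z + lambda * d (T x) (T z).
Proof.
  intros hxy hyz hxz.
  destruct d_metric as (_ & _ & dsym & dtri).
  pose proof (T_gen_CRR x y z hxy hyz hxz) as H.
  pose proof (dtri (T x) (T z) (T y)) as TxTy.
  pose proof (dtri y x z) as yz.
  pose proof (dtri z x (T z)) as zTz.
  pose proof (dtri x (T x) (T z)) as xTz.
  rewrite (dsym (T z) (T y)) in TxTy; rewrite (dsym y x) in yz;
    rewrite (dsym z x) in zTz, H.
  assert (Hyz : alpha * d y z <= alpha * (d x y + d x z))
    by (apply Rmult_le_compat_l; lra).
  assert (HzTz : lambda * d z (T z) <= lambda * (d x z + d x (T x) + d (T x) (T z)))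
    by (apply Rmult_le_compat_l; lra).
  lra.
Qed.

Hypothesis every_point_accumulation : forall x, accumulation_point d x.
Hypothesis T_continuous : metric_continuous d T.

Lemma exists_third_point_near x y eps :
  x <> y -> 0 < eps ->
  exists z, y <> z /\ x <> z /\ d x z < eps /\ d (T x) (T z) < eps.
Proof.
  intros hxy heps.
  destruct d_metric as (d_ge0 & d_eq0 & _ & _).
  assert (dxy_gt0 : 0 < d x y).
  { destruct (d_ge0 x y) as [h | h]; [exact h |].
    exfalso; apply hxy, d_eq0; auto. }
  destruct (T_continuous x eps heps) as (delta & hdelta & Hdelta).
  assert (hr : 0 < Rmin (Rmin eps delta) (d x y)) by (repeat apply Rmin_pos; auto).
  destruct (every_point_accumulation x _ hr) as (z & hzx & hz).
  pose proof (Rmin_l (Rmin eps delta) (d x y)).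
  pose proof (Rmin_r (Rmin eps delta) (d x y)).
  pose proof (Rmin_l eps delta); pose proof (Rmin_r eps delta).
  exists z; repeat split.
  - intros <-; lra.
  - intros <-; auto.
  - lra.
  - apply Hdelta; lra.
Qed.

Lemma gen_CRR_two_points x y :
  x <> y ->
  2 * d (T x) (T y)
    <= 2 * alpha * d x y + 2 * lambda * d x (T x) + lambda * d y (T y).
Proof.
  intros hxy.
  apply (Rle_plus_scaled_epsilon (2 * alpha + 2 * lambda)); [lra |].
  intros eps heps.
  destruct (exists_third_point_near x y eps hxy heps) as (z & hyz & hxz & hz & hTz).
  pose proof (gen_CRR_two_points_perturbed x y z hxy hyz hxz).
  assert ((2 * alpha + lambda) * d x z <= (2 * alpha + lambda) * eps)
    by (apply Rmult_le_compat_l; lra).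
  assert (lambda * d (T x) (T z) <= lambda * eps)
    by (apply Rmult_le_compat_l; lra).
  lra.
Qed.

Lemma gen_CRR_CRR_bc : CRR_bc d T alpha (3 * lambda / 4).
Proof.
  intros x y.
  destruct d_metric as (d_ge0 & d_eq0 & dsym & _).
  destruct (classic (x = y)) as [<- | hxy].
  - rewrite (proj2 (d_eq0 _ _) eq_refl).
    pose proof (d_ge0 x x); pose proof (d_ge0 x (T x)); nra.
  - pose proof (gen_CRR_two_points x y hxy) as Hxy.
    pose proof (gen_CRR_two_points y x (not_eq_sym hxy)) as Hyx.
    rewrite (dsym (T y) (T x)), (dsym y x) in Hyx.
    lra.
Qed.

End GeneralizedCRR.

Theorem corollary2p6 (X : Type) (d : X -> X -> R) (T : X -> X) (alpha lambda : R) :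
  is_metric d ->
  (exists x y z : X, x <> y /\ y <> z /\ x <> z) ->
  (forall x : X, accumulation_point d x) ->
  metric_continuous d T ->
  0 <= alpha -> 0 <= lambda -> 2 * alpha + 3 * lambda / 2 < 1 ->
  gen_CRR d T alpha lambda ->
  exists a b : R, 0 <= a /\ 0 <= b /\ a + 2 * b < 1 /\ CRR_bc d T a b.
Proof.
  intros d_metric _ acc T_cont alpha_ge0 lambda_ge0 hlt T_gen_CRR.
  exists alpha, (3 * lambda / 4).
  repeat split; try lra.
  apply gen_CRR_CRR_bc; assumption.
Qed.
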